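(* For every $n\in\mathbb{N}$, $\beta>0$, $\lambda$ with $n>\lambda\ge 2\log\frac{2}{\beta}$, and $x\in\{0,1\}^n$, \[ \Pr\left[\left|P_{n,\lambda}(x)-\sum_{i=1}^n x_i\right|>\sqrt{2\lambda\log(2/\beta)}\cdot\frac{n}{n-\lambda}\right]\le\beta. \]
   Context: $P_{n,\lambda}(x)$ denotes the output of the bit-sum protocol: each of $n$ users with $x_i\in\{0,1\}$ independently draws $b\sim\mathrm{Ber}(\lambda/n)$ and sends $y_i=x_i$ if $b=0$ and a fresh $\mathrm{Ber}(1/2)$ bit if $b=1$; the messages are shuffled uniformly at random; the analyzer outputs $\frac{n}{n-\lambda}\left(\sum_{i=1}^n y_i-\frac{\lambda}{2}\right)$. $\log$ is the natural logarithm. *)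

From HB Require Import structures.
From mathcomp Require Import all_boot all_order all_algebra all_fingroup.
From mathcomp Require Import all_classical all_reals all_analysis.
Set Implicit Arguments. Unset Strict Implicit. Unset Printing Implicit Defensive.
Import Order.TTheory GRing.Theory Num.Theory.
Local Open Scope ring_scope.

Section BitSum.
Variable R : realType.

Definition ber (p : R) (b : bool) : R := if b then p else 1 - p.

(* Per-user randomness: (b, c) with b ~ Ber(lambda/n) and c ~ Ber(1/2) the
   fresh bit; the shuffle is a uniformly random permutation of 'I_n. *)
Definition outcome (n : nat) : finType :=
  ({ffun 'I_n -> bool * bool} * {perm 'I_n})%type.

Definition weight (n : nat) (lambda : R) (w : outcome n) : R :=
  (\prod_(i < n) (ber (lambda / n%:R) (w.1 i).1 * ber (1/2) (w.1 i).2))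
  * (#|{perm 'I_n}|%:R)^-1.

Definition message (n : nat) (x : 'I_n -> bool) (w : outcome n) (i : 'I_n)
  : bool := if (w.1 i).1 then (w.1 i).2 else x i.

Definition shuffled (n : nat) (x : 'I_n -> bool) (w : outcome n) (j : 'I_n)
  : bool := message x w (w.2 j).

Definition bitsum_output (n : nat) (lambda : R) (x : 'I_n -> bool)
  (w : outcome n) : R :=
  n%:R / (n%:R - lambda) *
  ((\sum_(j < n) ((shuffled x w j : nat)%:R)) - lambda / 2).

Definition prob (n : nat) (lambda : R) (E : pred (outcome n)) : R :=
  \sum_(w : outcome n | E w) weight lambda w.

End BitSum.

From HB Require Import structures.
From mathcomp Require Import all_boot all_order all_algebra all_fingroup.
From mathcomp Require Import all_classical all_reals all_analysis.
From mathcomp Require Import ring lra.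

(* Shuffling does not change the sum of the messages, so the error of the
   analyzer is [n / (n - lambda)] times [D = sum_i (y_i - E y_i)], a sum of
   independent centred variables, each of the form [+-(B - q)] with
   [B ~ Ber(q)] and [q = lambda / 2n].  From [e^s <= 1 + s + s^2] on [[-1, 1]]
   each has moment generating function at most [e^(q s^2)], hence
   [E e^(sD) <= e^(lambda s^2 / 2)] for [|s| <= 1].  The two-sided Chernoff
   bound at [r = sqrt (2 ln(2/beta) / lambda)], which is at most [1] by the
   hypothesis on [lambda], gives
   [P(|D| > sqrt (2 lambda ln(2/beta))) <= 2 e^(-ln(2/beta)) = beta]. *)

Set Implicit Arguments.
Unset Strict Implicit.
Unset Printing Implicit Defensive.
Import Order.TTheory GRing.Theory Num.Theory.
Local Open Scope ring_scope.

Section RealInequalities.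
Variable R : realType.

Lemma expR_1BxDx2_ge1 (t : R) : -1 <= t <= 0 -> 1 <= expR t * (1 - t + t ^+ 2).
Proof.
move=> /andP[t_ge t_le].
pose k (u : R) := expR u * (1 - u + u ^+ 2).
have k_derive (u : R) : is_derive u 1 k (expR u * (u * (1 + u))).
  by apply: is_derive_eq; rewrite /GRing.scale /= !mulr1; lra.
have : k 0 <= k t.
  apply: (@ler0_derive1_nincr R k (-1) 0) => //.
  - move=> u; rewrite in_itv /= => /andP[u_gt u_lt].
    by rewrite derive1E derive_val pmulr_rle0 ?expR_gt0 //; nra.
  - by apply: derivable_within_continuous => u _; exact: ex_derive.
by rewrite /k expR0 mul1r expr0n /= subr0 addr0.
Qed.

Lemma expR_le1DxDx2 (s : R) : -1 <= s <= 1 -> expR s <= 1 + s + s ^+ 2.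
Proof.
move=> /andP[s_ge s_le].
have expR_inv : expR s * expR (- s) = 1 by rewrite expRxMexpNx_1.
have := expR_gt0 s; have [s_ge0|s_lt0] := leP 0 s => expR_pos.
  have := @expR_1BxDx2_ge1 (- s); rewrite sqrrN opprK.
  move=> /(_ ltac:(lra)) /(ler_wpM2l (ltW expR_pos)).
  by rewrite mulr1 mulrA expR_inv mul1r.
(* [e^s <= 1 / (1 - s) <= 1 + s + s^2] for [s <= 0] *)
have := expR_ge1Dx (- s); nra.
Qed.

Lemma centered_bernoulli_mgf_le (q s : R) : 0 <= q <= 1 -> -1 <= s <= 1 ->
  q * expR (s * (1 - q)) + (1 - q) * expR (- (s * q)) <= expR (q * s ^+ 2).
Proof.
move=> /andP[q_ge0 q_le1] s_bound.
have -> : q * expR (s * (1 - q)) + (1 - q) * expR (- (s * q))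
          = expR (- (s * q)) * (1 + q * (expR s - 1)).
  by rewrite mulrBr mulr1 expRB expRN; field; rewrite expR_eq0.
apply: le_trans (_ : expR (- (s * q)) * expR (q * (expR s - 1)) <= _).
  by rewrite ler_wpM2l ?expR_ge0 // expR_ge1Dx.
rewrite -expRD ler_expR.
have := @expR_le1DxDx2 s s_bound.
rewrite -subr_ge0 => /(mulr_ge0 q_ge0); lra.
Qed.

Lemma expR_le_lt_norm (r t d : R) : 0 <= r -> t < `|d| ->
  expR (r * t) <= expR (r * d) + expR (- r * d).
Proof.
move=> r_ge0 /ltW t_le; apply: (@le_trans _ _ (expR (r * `|d|))).
  by rewrite ler_expR ler_wpM2l.
have := expR_ge0 (r * d); have := expR_ge0 (- r * d).
by case: (ler0P d) => _; rewrite ?mulrN ?mulNr ?opprK; lra.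
Qed.

Lemma chernoff_rate (lambda L : R) : 0 < L -> 2 * L <= lambda ->
  exists2 r : R, 0 <= r <= 1 &
    lambda / 2 * r ^+ 2 - r * Num.sqrt (2 * lambda * L) = - L.
Proof.
move=> L_gt0 L_le; have lambda_gt0 : 0 < lambda by lra.
have ratio_ge0 : 0 <= 2 * L / lambda by rewrite divr_ge0 //; lra.
exists (Num.sqrt (2 * L / lambda)).
  by rewrite sqrtr_ge0 /= -[X in _ <= X]sqrtr1 ler_sqrt ?ler01 // ler_pdivrMr // mul1r.
rewrite sqr_sqrtr // -sqrtrM //.
have -> : 2 * L / lambda * (2 * lambda * L) = (2 * L) ^+ 2 by field; rewrite gt_eqF.
by rewrite sqrtr_sqr ger0_norm; [field; rewrite gt_eqF | lra].
Qed.
End RealInequalities.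

Section BitSumDeviation.
Variable R : realType.

(* A user's message minus its mean, as a function of the user's coins [v = (b, c)]. *)
Definition msg_dev (p : R) (xi : bool) (v : bool * bool) : R :=
  ((if v.1 then v.2 else xi) : nat)%:R - (p / 2 + (1 - p) * (xi : nat)%:R).

Lemma sum_ber_msg (p : R) (xi : bool) (f : bool -> R) :
  \sum_(v : bool * bool) ber p v.1 * ber (1 / 2) v.2 * f (if v.1 then v.2 else xi)
  = p / 2 * f (~~ xi) + (1 - p / 2) * f xi.
Proof.
rewrite -(pair_bigA _ (fun b c => ber p b * ber (1 / 2) c * f (if b then c else xi))).
by rewrite /= !big_bool /=; case: xi => /=; field.
Qed.

Lemma msg_dev_mgf_le (p s : R) (xi : bool) : 0 <= p <= 1 -> -1 <= s <= 1 ->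
  \sum_(v : bool * bool) ber p v.1 * ber (1 / 2) v.2 * expR (s * msg_dev p xi v)
  <= expR (p / 2 * s ^+ 2).
Proof.
move=> p_bound s_bound.
rewrite (sum_ber_msg p xi (fun y : bool => expR (s * (y%:R - (p / 2 + (1 - p) * xi%:R))))).
have q_bound : 0 <= p / 2 <= 1 by lra.
case: xi => /=; rewrite ?mulr0n ?mulr1n ?mulr0 ?mulr1 ?addr0.
- (* [x_i = 1]: the message is [0] with probability [p / 2], a centred Bernoulli at [-s] *)
  rewrite (_ : s * (0 - _) = - s * (1 - p / 2)); last by field.
  rewrite (_ : s * (1 - _) = - (- s * (p / 2))); last by field.
  by rewrite -(sqrrN s) centered_bernoulli_mgf_le //; lra.
- rewrite (_ : s * (0 - _) = - (s * (p / 2))); last by field.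
  exact: centered_bernoulli_mgf_le.
Qed.

Variables (n : nat) (lambda : R) (x : 'I_n -> bool).
Hypotheses (lambda_ge0 : 0 <= lambda) (lambda_lt_n : lambda < n%:R).

Let n_gt0 : (0 < n%:R :> R). Proof. exact: le_lt_trans lambda_lt_n. Qed.

Let p_bound : 0 <= lambda / n%:R <= 1.
Proof. by rewrite divr_ge0 ?ler_pdivrMr // ?mul1r ?(ltW n_gt0) ?(ltW lambda_lt_n). Qed.

Let ber_ge0 (q : R) b : 0 <= q <= 1 -> 0 <= ber q b.
Proof. by case: b => /=; lra. Qed.

Definition dev_sum (g : {ffun 'I_n -> bool * bool}) : R :=
  \sum_(i < n) msg_dev (lambda / n%:R) (x i) (g i).

Lemma weight_ge0 (w : outcome n) : 0 <= weight lambda w.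
Proof.
rewrite mulr_ge0 ?invr_ge0 ?ler0n // prodr_ge0 // => i _.
by rewrite mulr_ge0 ?ber_ge0 //; lra.
Qed.

Lemma sum_weight_ffun (F : {ffun 'I_n -> bool * bool} -> R) :
  \sum_(w : outcome n) weight lambda w * F w.1 =
  \sum_(g : {ffun 'I_n -> bool * bool})
     (\prod_(i < n) (ber (lambda / n%:R) (g i).1 * ber (1 / 2) (g i).2)) * F g.
Proof.
rewrite -(pair_bigA _ (fun g s => weight lambda (g, s) * F g)) /=.
apply: eq_bigr => g _.
under eq_bigr => s _ do rewrite /weight /=.
rewrite sumr_const card_Sn; field.
by rewrite pnatr_eq0 -lt0n fact_gt0.
Qed.

Lemma dev_sum_mgf_le (s : R) : -1 <= s <= 1 ->
  \sum_(w : outcome n) weight lambda w * expR (s * dev_sum w.1)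
  <= expR (lambda / 2 * s ^+ 2).
Proof.
move=> s_bound.
rewrite (sum_weight_ffun (fun g => expR (s * dev_sum g))).
under eq_bigr do rewrite /dev_sum mulr_sumr expR_sum -big_split /=.
(* independence of the users: the expectation of the product factorizes *)
rewrite -(bigA_distr_bigA (fun i v => ber (lambda / n%:R) v.1 * ber (1 / 2) v.2
                                     * expR (s * msg_dev (lambda / n%:R) (x i) v))) /=.
apply: (@le_trans _ _ (\prod_(i < n) expR (lambda / n%:R / 2 * s ^+ 2))).
  apply: ler_prod => i _; rewrite msg_dev_mgf_le // andbT.
  by apply: sumr_ge0 => v _; rewrite !mulr_ge0 ?expR_ge0 ?ber_ge0 //; lra.
rewrite prodr_const card_ord -expRM_natl.
have -> : n%:R * (lambda / n%:R / 2 * s ^+ 2) = lambda / 2 * s ^+ 2.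
  by field; rewrite gt_eqF.
by [].
Qed.

Lemma bitsum_output_dev (w : outcome n) :
  bitsum_output lambda x w - \sum_(i < n) ((x i : nat)%:R) =
  n%:R / (n%:R - lambda) * dev_sum w.1.
Proof.
have sum_shuffled : \sum_(j < n) ((shuffled x w j : nat)%:R : R) =
                    \sum_(i < n) ((message x w i : nat)%:R : R).
  by rewrite [RHS](reindex_inj (@perm_inj _ w.2)).
rewrite /bitsum_output sum_shuffled /dev_sum /msg_dev sumrB big_split /=.
rewrite sumr_const card_ord -mulr_sumr.
by field; rewrite subr_eq0 !gt_eqF.
Qed.

Lemma prob_dev_sum_gt_le (r t : R) : 0 <= r <= 1 ->
  prob lambda (fun w : outcome n => t < `|dev_sum w.1|)
  <= 2 * expR (lambda / 2 * r ^+ 2 - r * t).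
Proof.
move=> /andP[r_ge0 r_le1].
pose mgf s := \sum_(w : outcome n) weight lambda w * expR (s * dev_sum w.1).
have markov_pointwise (w : outcome n) :
    (if t < `|dev_sum w.1| then weight lambda w else 0)
    <= weight lambda w * (expR (- (r * t))
                          * (expR (r * dev_sum w.1) + expR (- r * dev_sum w.1))).
  case: ifP => [t_lt|_].
    rewrite -[X in X <= _]mulr1 ler_wpM2l ?weight_ge0 //.
    rewrite -(expRxMexpNx_1 (r * t)) mulrC ler_wpM2l ?expR_ge0 //.
    exact: expR_le_lt_norm.
  by rewrite mulr_ge0 ?weight_ge0 // mulr_ge0 ?expR_ge0 // addr_ge0 ?expR_ge0.
apply: le_trans (_ : expR (- (r * t)) * (mgf r + mgf (- r)) <= _).
  rewrite /prob big_mkcond /=; apply: le_trans (ler_sum _ (fun w _ => markov_pointwise w)) _.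
  by under eq_bigr do rewrite mulrCA mulrDr; rewrite -mulr_sumr big_split.
have -> : 2 * expR (lambda / 2 * r ^+ 2 - r * t) = expR (- (r * t)) *
    (expR (lambda / 2 * r ^+ 2) + expR (lambda / 2 * (- r) ^+ 2)).
  by rewrite sqrrN expRD; ring.
by rewrite ler_wpM2l ?expR_ge0 // lerD // dev_sum_mgf_le //; lra.
Qed.

End BitSumDeviation.

Theorem theorem4p11 (R : realType) (n : nat) (beta lambda : R)
  (x : 'I_n -> bool) :
  0 < beta -> 0 <= lambda -> lambda < n%:R ->
  2 * ln (2 / beta) <= lambda ->
  prob lambda (fun w : outcome n =>
    Num.sqrt (2 * lambda * ln (2 / beta)) * (n%:R / (n%:R - lambda))
    < `| bitsum_output lambda x w - \sum_(i < n) ((x i : nat)%:R) |)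
  <= beta.
Proof.
move=> beta_gt0 lambda_ge0 lambda_lt_n rate_le.
set t := Num.sqrt _; set c := n%:R / _.
have c_gt0 : 0 < c by rewrite divr_gt0 ?subr_gt0 // (le_lt_trans lambda_ge0).
have -> : prob lambda (fun w => t * c < `|bitsum_output lambda x w - \sum_(i < n) (x i : nat)%:R|)
        = prob lambda (fun w => t < `|dev_sum lambda x w.1|).
  apply: eq_bigl => w.
  by rewrite bitsum_output_dev // normrM (gtr0_norm c_gt0) (mulrC c) ltr_pM2r.
have [L_le0|L_gt0] := lerP (ln (2 / beta)) 0.
  have r0_bound : 0 <= (0 : R) <= 1 by lra.
  apply: le_trans (prob_dev_sum_gt_le x lambda_ge0 lambda_lt_n t r0_bound) _.
  rewrite expr0n mulr0 mul0r subr0 expR0 mulr1.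
  have : expR (ln (2 / beta)) <= 1 by rewrite expR_le1.
  by rewrite lnK ?posrE ?divr_gt0 // ler_pdivrMr // mul1r.
have [r r_bound exponent] := chernoff_rate L_gt0 rate_le.
apply: le_trans (prob_dev_sum_gt_le x lambda_ge0 lambda_lt_n t r_bound) _.
by rewrite /t exponent expRN lnK ?posrE ?divr_gt0 // invf_div; lra.
Qed.
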